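(* Let $\mathcal M=(\mathbf M^{(\lambda)})_{\lambda>0}$ be a weight matrix on $\mathbb N_0^d$. (i) If for every $\lambda>0$ there exist $0<\kappa\le\lambda$ and $A\ge1$ with $M^{(\kappa)}_{\alpha+e_j}\le A^{|\alpha|+1}M^{(\lambda)}_\alpha$ for all $\alpha\in\mathbb N_0^d$, $1\le j\le d$, then for every $\lambda>0$ and $N\in\mathbb N$ there exist $0<\kappa\le\lambda$ and $A,B\ge1$ such that $$\omega_{\mathbf M^{(\lambda)}}(t)+N\log|t|\le\omega_{\mathbf M^{(\kappa)}}(At)+B\quad\text{for all }t\in\mathbb R^d\setminus\{0\}.$$ (ii) If for every $\lambda>0$ there exist $\kappa\ge\lambda$ and $A\ge1$ with $M^{(\lambda)}_{\alpha+e_j}\le A^{|\alpha|+1}M^{(\kappa)}_\alpha$ for all $\alpha\in\mathbb N_0^d$, $1\le j\le d$, then for every $\lambda>0$ and $N\in\mathbb N$ there exist $\kappa\ge\lambda$ and $A,B\ge1$ such that $$\omega_{\mathbf M^{(\kappa)}}(t)+N\log|t|\le\omega_{\mathbf M^{(\lambda)}}(At)+B\quad\text{for all }t\in\mathbb R^d\setminus\{0\}.$$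
   Context: A weight matrix is a family $\mathcal M=(\mathbf M^{(\lambda)})_{\lambda>0}$ with $\mathbf M^{(\lambda)}=(M^{(\lambda)}_\alpha)_{\alpha\in\mathbb N_0^d}$ sequences of positive reals, $M^{(\lambda)}_0=1$, and $M^{(\lambda)}_\alpha\le M^{(\kappa)}_\alpha$ for all $\alpha$ whenever $0<\lambda\le\kappa$. $e_j$ is the $j$-th unit vector, $|\alpha|=\sum\alpha_j$, $|t|$ the Euclidean norm. The associated weight function of $\mathbf M=(M_\alpha)$ is $\omega_{\mathbf M}(t)=\sup_{\alpha\in\mathbb N^d_{0,t}}\log\frac{|t^\alpha|}{M_\alpha}$ ($t\in\mathbb R^d$, possibly $+\infty$), where $\mathbb N^d_{0,t}=\{\alpha:\alpha_j=0\text{ whenever }t_j=0\}$ and $0^0:=1$. *)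

From mathcomp Require Import all_boot all_order all_algebra.
From mathcomp Require Import all_classical all_reals all_analysis.
Set Implicit Arguments. Unset Strict Implicit. Unset Printing Implicit Defensive.
Import Order.TTheory GRing.Theory Num.Theory.
Local Open Scope ring_scope.
Local Open Scope classical_set_scope.

Definition mindex (d : nat) := 'I_d -> nat.

Definition mlen (d : nat) (a : mindex d) : nat := (\sum_(j < d) a j)%N.

Definition madd_e (d : nat) (a : mindex d) (j : 'I_d) : mindex d :=
  fun i => if i == j then (a i).+1 else a i.

(* t^alpha = prod_j t_j^{alpha_j} (with 0^0 = 1) *)
Definition mpow (R : realType) (d : nat) (t : 'I_d -> R) (a : mindex d) : R :=
  \prod_(j < d) t j ^+ a j.

Definition enorm (R : realType) (d : nat) (t : 'I_d -> R) : R :=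
  Num.sqrt (\sum_(j < d) t j ^+ 2).

Definition dilate (R : realType) (d : nat) (A : R) (t : 'I_d -> R) : 'I_d -> R :=
  fun j => A * t j.

Definition adm (R : realType) (d : nat) (t : 'I_d -> R) (a : mindex d) : Prop :=
  forall j, t j = 0 -> a j = 0%N.

Definition weight_matrix (R : realType) (d : nat) (M : R -> mindex d -> R) : Prop :=
  (forall lam, 0 < lam -> forall a, 0 < M lam a) /\
  (forall lam, 0 < lam -> M lam (fun _ => 0%N) = 1) /\
  (forall lam kap, 0 < lam -> lam <= kap -> forall a, M lam a <= M kap a).

Definition omegaM (R : realType) (d : nat) (Mseq : mindex d -> R) (t : 'I_d -> R)
  : \bar R :=
  ereal_sup [set ((ln (`|mpow t a| / Mseq a))%:E) | a in adm t].

From mathcomp Require Import all_boot all_order all_algebra.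
From mathcomp Require Import all_classical all_reals all_analysis.
From mathcomp Require Import ring lra.
Import Order.TTheory GRing.Theory Num.Theory.

(* Fix t <> 0 and a coordinate j where |t_j| is maximal, so that
   |t| <= sqrt d |t_j|.  Moving an admissible alpha to alpha + N e_j multiplies
   |t^alpha| by |t_j|^N >= (|t| / sqrt d)^N, while the hypothesis, iterated N
   times along a chain of parameters, bounds the new weight by
   C^(|alpha|+1) M_alpha.  The factor C^|alpha| is absorbed by dilating t by C,
   leaving the additive constant log C + N log (sqrt d). *)

Set Implicit Arguments. Unset Strict Implicit.
Local Open Scope ring_scope.

Section MultiIndex.
Variable R : realType.
Variable d : nat.

Definition madd_en (a : mindex d) (j : 'I_d) (n : nat) : mindex d :=
  iter n (fun b => madd_e b j) a.

Lemma mlen_madd_e (a : mindex d) (j : 'I_d) : mlen (madd_e a j) = (mlen a).+1.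
Proof.
rewrite /mlen (bigD1 j) //= [in RHS](bigD1 j) //= /madd_e eqxx addSn.
by congr (_.+1 + _)%N; apply: eq_bigr => i /negPf ->.
Qed.

Lemma mlen_madd_en (a : mindex d) j n : mlen (madd_en a j n) = (mlen a + n)%N.
Proof. by elim: n => [|n IH]; rewrite ?addn0 //= mlen_madd_e IH addnS. Qed.

Lemma mpow_madd_e (t : 'I_d -> R) a j : mpow t (madd_e a j) = mpow t a * t j.
Proof.
rewrite /mpow (bigD1 j) //= [in RHS](bigD1 j) //= /madd_e eqxx exprS.
rewrite (eq_bigr (fun i => t i ^+ a i)) => [|i /negPf -> //].
by rewrite [RHS]mulrAC [_ * t j]mulrC.
Qed.

Lemma mpow_madd_en (t : 'I_d -> R) a j n :
  mpow t (madd_en a j n) = mpow t a * t j ^+ n.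
Proof.
by elim: n => [|n IH]; rewrite ?mulr1 //= mpow_madd_e IH exprSr mulrA.
Qed.

Lemma mpow_dilate (C : R) (t : 'I_d -> R) a :
  mpow (dilate C t) a = C ^+ mlen a * mpow t a.
Proof.
rewrite /mpow /dilate /mlen -prodrXr -big_split /=.
by apply: eq_bigr => i _; rewrite exprMn.
Qed.

Lemma mpow_neq0 (t : 'I_d -> R) a : adm t a -> mpow t a != 0.
Proof.
move=> ta; apply/prodf_neq0 => i _.
have [ti0|ti0] := eqVneq (t i) 0; last exact: expf_neq0.
by rewrite (ta i ti0) expr0 oner_neq0.
Qed.

Lemma adm_madd_en (t : 'I_d -> R) a j n :
  t j != 0 -> adm t a -> adm t (madd_en a j n).
Proof.
move=> tj0 ta; elim: n => [//|n IH] i ti0 /=; rewrite /madd_e.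
by case: eqP => [eij|_]; [move: tj0; rewrite -eij ti0 eqxx | exact: IH].
Qed.

Lemma adm_dilate (C : R) (t : 'I_d -> R) a :
  C != 0 -> adm t a -> adm (dilate C t) a.
Proof. by move=> C0 ta i /eqP; rewrite mulf_eq0 (negPf C0) => /eqP /ta. Qed.

End MultiIndex.

Section EuclideanNorm.
Variable R : realType.
Variable d : nat.
Implicit Type t : 'I_d -> R.

Lemma exists_max_coord t : t <> (fun _ => 0) ->
  exists j, t j != 0 /\ forall i, `|t i| <= `|t j|.
Proof.
move=> t_neq0; have [i0 ti0] : exists i, t i != 0.
  apply/not_existsP => /= t0; apply/t_neq0/funext => i.
  by apply/eqP; apply/negPn/negP; exact: t0.
have [j _ jmax] := @arg_maxP _ _ _ i0 xpredT (fun i => `|t i|) isT.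
exists j; split => [|i]; last exact: jmax.
by rewrite -normr_gt0 (lt_le_trans _ (jmax i0 isT)) ?normr_gt0.
Qed.

Lemma coord_le_enorm t i : `|t i| <= enorm t.
Proof.
rewrite /enorm -sqrtr_sqr ler_sqrt ?sumr_ge0 // => [|k _]; last exact: sqr_ge0.
by rewrite (bigD1 i) //= lerDl sumr_ge0 // => k _; rewrite sqr_ge0.
Qed.

Lemma enorm_le_max t j : (forall i, `|t i| <= `|t j|) ->
  enorm t <= Num.sqrt d%:R * `|t j|.
Proof.
move=> jmax; rewrite /enorm -(sqrtr_sqr (t j)) -sqrtrM ?ler0n //.
rewrite ler_sqrt; last by rewrite mulr_ge0 ?sqr_ge0.
have sqr_le i : t i ^+ 2 <= t j ^+ 2.
  by rewrite -(real_normK (num_real (t i))) -(real_normK (num_real (t j))) ler_sqr.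
apply: le_trans (ler_sum _ (fun i _ => sqr_le i)) _.
by rewrite sumr_const card_ord mulr_natl.
Qed.

End EuclideanNorm.

Section ShiftedWeights.
Variable R : realType.
Variable d : nat.

Definition shift_le (C : R) (n : nat) (M1 M2 : mindex d -> R) : Prop :=
  forall a j, M1 (madd_en a j n) <= C ^+ (mlen a).+1 * M2 a.

Lemma shift_le0 (M : mindex d -> R) : shift_le 1 0 M M.
Proof. by move=> a j; rewrite expr1n mul1r. Qed.

Lemma shift_le_comp (A C : R) n (M0 M1 M2 : mindex d -> R) :
  1 <= A -> 1 <= C -> (forall a, 0 <= M2 a) ->
  shift_le A 1 M0 M1 -> shift_le C n M1 M2 -> shift_le (A ^+ n.+1 * C) n.+1 M0 M2.
Proof.
move=> A1 C1 M2_ge0 M01 M12 a j.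
have A0 : 0 <= A := le_trans ler01 A1.
have C0 : 0 <= C := le_trans ler01 C1.
apply: le_trans (M01 (madd_en a j n) j) _; rewrite mlen_madd_en.
apply: le_trans (ler_wpM2l (exprn_ge0 _ A0) (M12 a j)) _.
rewrite exprMn -exprM mulrA; apply: ler_wpM2r => //.
apply: ler_wpM2r; first exact: exprn_ge0.
by rewrite ler_weXn2l // mulSn addSn ltnS leq_add2l leq_pmulr.
Qed.

Lemma shift_ratio_le (Mo Ms : mindex d -> R) (C : R) n (t : 'I_d -> R) a j :
  0 < Mo a -> 0 < Ms (madd_en a j n) -> 1 <= C ->
  Ms (madd_en a j n) <= C ^+ (mlen a).+1 * Mo a ->
  `|mpow t a| / Mo a * `|t j| ^+ n / C
    <= `|mpow (dilate C t) (madd_en a j n)| / Ms (madd_en a j n).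
Proof.
move=> Mo0 Ms0 C1 Ms_le; have C0 : 0 < C := lt_le_trans ltr01 C1.
set b := madd_en a j n; set p := `|mpow t a|; set x := `|t j| ^+ n.
have s_le : Ms b / Mo a <= C ^+ (mlen a + n) * C.
  rewrite ler_pdivrMr // -exprSr; apply: le_trans Ms_le _.
  by apply: ler_wpM2r; [exact: ltW | rewrite ler_weXn2l // ltnS leq_addr].
rewrite mpow_dilate mlen_madd_en mpow_madd_en !normrM !normrX.
rewrite ger0_norm ?exprn_ge0 ?(ltW C0) // -/p -/x.
rewrite ler_pdivlMr // mulrAC ler_pdivrMr //.
rewrite (_ : p / Mo a * x * Ms b = p * x * (Ms b / Mo a)); last by ring.
rewrite (_ : C ^+ _ * (p * x) * C = p * x * (C ^+ (mlen a + n) * C)); last by ring.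
by apply: ler_wpM2l s_le; rewrite /p /x mulr_ge0 ?exprn_ge0.
Qed.

Lemma omegaM_dilate_shift (Mo Ms : mindex d -> R) (C : R) (n : nat) :
  (forall a, 0 < Mo a) -> (forall a, 0 < Ms a) -> 1 <= C -> shift_le C n Ms Mo ->
  forall t : 'I_d -> R, t <> (fun _ => 0) ->
  (omegaM Mo t + (n%:R * ln (enorm t))%:E
     <= omegaM Ms (dilate C t) + (ln C + n%:R * ln (Num.sqrt d%:R))%:E)%E.
Proof.
move=> Mo_gt0 Ms_gt0 C1 MsMo t t_neq0; have C_gt0 : 0 < C := lt_le_trans ltr01 C1.
have [j [tj_neq0 jmax]] := exists_max_coord t_neq0.
have tj_gt0 : 0 < `|t j| by rewrite normr_gt0.
have sqrtd_gt0 : 0 < Num.sqrt (d%:R : R).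
  by rewrite sqrtr_gt0 ltr0n (leq_ltn_trans _ (ltn_ord j)).
have ln_enorm : ln (enorm t) <= ln (Num.sqrt d%:R) + ln `|t j|.
  rewrite -lnM ?posrE // ler_ln ?posrE ?mulr_gt0 ?enorm_le_max //.
  exact: lt_le_trans tj_gt0 (coord_le_enorm t j).
set B := ln C + _; set c := n%:R * ln (enorm t).
suff omega_le : (omegaM Mo t <= omegaM Ms (dilate C t) + (B - c)%:E)%E.
  by apply: le_trans (leeD2r c%:E omega_le) _; rewrite -addeA -EFinD subrK.
apply: ge_ereal_sup => _ [a ta <-]; set b := madd_en a j n.
have tb : adm (dilate C t) b.
  by apply: adm_dilate; [exact: lt0r_neq0 | exact: adm_madd_en].
have omega_ge : ((ln (`|mpow (dilate C t) b| / Ms b))%:E <= omegaM Ms (dilate C t))%E.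
  by apply: ereal_sup_ubound; exists b.
apply: le_trans (leeD2r _ omega_ge); rewrite -EFinD lee_fin.
have p_gt0 : 0 < `|mpow t a| / Mo a by rewrite divr_gt0 ?normr_gt0 ?mpow_neq0.
have q_gt0 : 0 < `|mpow (dilate C t) b| / Ms b by rewrite divr_gt0 ?normr_gt0 ?mpow_neq0.
have lhs_gt0 : 0 < `|mpow t a| / Mo a * `|t j| ^+ n / C.
  by rewrite divr_gt0 // mulr_gt0 // exprn_gt0.
have := shift_ratio_le t (Mo_gt0 a) (Ms_gt0 b) C1 (MsMo a j).
rewrite -ler_ln ?posrE //.
rewrite lnM ?posrE ?invr_gt0 ?(mulr_gt0 p_gt0) ?exprn_gt0 // lnV ?posrE //.
rewrite lnM ?posrE ?exprn_gt0 // lnXn // -mulr_natl.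
have : c <= n%:R * (ln (Num.sqrt d%:R) + ln `|t j|) by rewrite ler_wpM2l.
rewrite /B; lra.
Qed.

Lemma exists_omegaM_dilate_bound (Mo Ms : mindex d -> R) (C : R) (n : nat) :
  (forall a, 0 < Mo a) -> (forall a, 0 < Ms a) -> 1 <= C -> shift_le C n Ms Mo ->
  exists A B : R, 1 <= A /\ 1 <= B /\
    forall t : 'I_d -> R, t <> (fun _ => 0) ->
    (omegaM Mo t + (n%:R * ln (enorm t))%:E <= omegaM Ms (dilate A t) + B%:E)%E.
Proof.
move=> Mo_gt0 Ms_gt0 C1 MsMo; exists C, (Num.max 1 (ln C + n%:R * ln (Num.sqrt d%:R))).
do 2!split=> //; first by rewrite le_max lexx.
move=> t t_neq0; apply: le_trans (omegaM_dilate_shift Mo_gt0 Ms_gt0 C1 MsMo t_neq0) _.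
by rewrite leeD2l // lee_fin le_max lexx orbT.
Qed.

End ShiftedWeights.

Section WeightMatrix.
Variable R : realType.
Variable d : nat.
Variable M : R -> mindex d -> R.
Hypothesis M_gt0 : forall lam, 0 < lam -> forall a, 0 < M lam a.

Lemma shift_le_iter_below :
  (forall lam, 0 < lam -> exists kap A : R,
     0 < kap /\ kap <= lam /\ 1 <= A /\ shift_le A 1 (M kap) (M lam)) ->
  forall n lam, 0 < lam -> exists kap C : R,
     0 < kap /\ kap <= lam /\ 1 <= C /\ shift_le C n (M kap) (M lam).
Proof.
move=> shift1; elim=> [|n IH] lam lam_gt0.
  by exists lam, 1; do !split=> //; exact: shift_le0.
have [k [C [k_gt0 [k_le [C1 MkM]]]]] := IH lam lam_gt0.
have [k' [A [k'_gt0 [k'_le [A1 Mk'Mk]]]]] := shift1 k k_gt0.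
exists k', (A ^+ n.+1 * C); do !split=> //; first exact: le_trans k'_le k_le.
  by rewrite mulr_ege1 // exprn_ege1.
by apply: shift_le_comp Mk'Mk MkM => // a; exact/ltW/M_gt0.
Qed.

Lemma shift_le_iter_above :
  (forall lam, 0 < lam -> exists kap A : R,
     lam <= kap /\ 1 <= A /\ shift_le A 1 (M lam) (M kap)) ->
  forall n lam, 0 < lam -> exists kap C : R,
     lam <= kap /\ 1 <= C /\ shift_le C n (M lam) (M kap).
Proof.
move=> shift1; elim=> [|n IH] lam lam_gt0.
  by exists lam, 1; do !split=> //; exact: shift_le0.
have [k [A [k_ge [A1 MlamMk]]]] := shift1 lam lam_gt0.
have k_gt0 : 0 < k := lt_le_trans lam_gt0 k_ge.
have [k' [C [k'_ge [C1 MkMk']]]] := IH k k_gt0.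
exists k', (A ^+ n.+1 * C); do !split=> //; first exact: le_trans k_ge k'_ge.
  by rewrite mulr_ege1 // exprn_ege1.
by apply: shift_le_comp MlamMk MkMk' => // a; exact/ltW/M_gt0/(lt_le_trans k_gt0).
Qed.

End WeightMatrix.

Theorem lemma3p3 (R : realType) (d : nat) (M : R -> mindex d -> R) :
  weight_matrix M ->
  ((forall lam, 0 < lam -> exists (kap A : R), 0 < kap /\ kap <= lam /\ 1 <= A /\
       forall (a : mindex d) (j : 'I_d),
         M kap (madd_e a j) <= A ^+ (mlen a).+1 * M lam a) ->
   forall lam (N : nat), 0 < lam -> exists (kap A B : R),
     0 < kap /\ kap <= lam /\ 1 <= A /\ 1 <= B /\
     forall t : 'I_d -> R, t <> (fun _ => 0) ->
       (omegaM (M lam) t + (N%:R * ln (enorm t))%:E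
          <= omegaM (M kap) (dilate A t) + B%:E)%E)
  /\
  ((forall lam, 0 < lam -> exists (kap A : R), lam <= kap /\ 1 <= A /\
       forall (a : mindex d) (j : 'I_d),
         M lam (madd_e a j) <= A ^+ (mlen a).+1 * M kap a) ->
   forall lam (N : nat), 0 < lam -> exists (kap A B : R),
     lam <= kap /\ 1 <= A /\ 1 <= B /\
     forall t : 'I_d -> R, t <> (fun _ => 0) ->
       (omegaM (M kap) t + (N%:R * ln (enorm t))%:E
          <= omegaM (M lam) (dilate A t) + B%:E)%E).
Proof.
move=> [M_gt0 _]; split=> shift1 lam N lam_gt0.
- have [kap [C [kap_gt0 [kap_le [C1 MkapM]]]]] :=
    shift_le_iter_below M_gt0 shift1 N lam_gt0.
  have [A [B [A1 [B1 omega_le]]]] :=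
    exists_omegaM_dilate_bound (M_gt0 _ lam_gt0) (M_gt0 _ kap_gt0) C1 MkapM.
  by exists kap, A, B.
- have [kap [C [kap_ge [C1 MMkap]]]] := shift_le_iter_above M_gt0 shift1 N lam_gt0.
  have kap_gt0 : 0 < kap := lt_le_trans lam_gt0 kap_ge.
  have [A [B [A1 [B1 omega_le]]]] :=
    exists_omegaM_dilate_bound (M_gt0 _ kap_gt0) (M_gt0 _ lam_gt0) C1 MMkap.
  by exists kap, A, B.
Qed.
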